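(* Let $F_{63}$ be the $3$-graph constructed as follows. Start with one edge $x_1x_2x_3$. For each $i\in[3]$, writing $\{s,t\}=[3]\setminus\{i\}$, add new vertices $a_i,b_i,a_i',b_i'$ and the four edges $a_ib_ix_s,\ a_ib_ix_t,\ a_i'b_i'x_s,\ a_i'b_i'x_t$. Then, for each of the $12$ pairs $xy\in\{x_ia_i,\ x_ib_i,\ x_ia_i',\ x_ib_i' : i\in[3]\}$, add four new vertices $c,d,c',d'$ (distinct from all others) and the four edges $cdx,\ cdy,\ c'd'x,\ c'd'y$. Then $F_{63}$ has $63$ vertices and $61$ edges, $F_{63}$ is $\mathcal{G}^{(3)}_6$-free, and $|P_{\le 3}(F_{63})|=165$ (namely $P_{\le3}(F_{63})$ consists of $P_1(F_{63})$ together with the $12$ pairs listed above).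
   Context: A $3$-graph is a $3$-uniform hypergraph. An $(s,k)$-configuration is a $3$-graph with exactly $k$ edges and at most $s$ vertices. $\mathcal{G}^{(3)}_6$ is the family of all $3$-graphs that are either $(8,6)$-configurations or $(\ell+1,\ell)$-configurations for some $\ell\in\{2,\dots,5\}$; a $3$-graph is $\mathcal{G}^{(3)}_6$-free if it contains no member of this family as a subgraph. For a $3$-graph $F$ and distinct vertices $x,y$, $C_F(xy)$ is the set of integers $i\geq 0$ for which there are $i$ distinct edges $X_1,\dots,X_i$ of $F$ with $|\{x,y\}\cup\bigcup_j X_j|\le i+2$. $P_1(F)$ is the set of pairs of vertices lying together in some edge, and $P_{\le t}(F)$ is the set of pairs $xy$ of vertices of $F$ with $C_F(xy)\cap\{1,\dots,t\}\neq\emptyset$. *)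

From mathcomp Require Import all_boot.
Set Implicit Arguments. Unset Strict Implicit. Unset Printing Implicit Defensive.

Section Hyper.
Variable V : finType.
Implicit Types (E : {set {set V}}).

Definition is_3graph E := [forall e in E, #|e| == 3].

Definition span E := \bigcup_(e in E) e.

Definition has_conf E (s k : nat) :=
  exists E' : {set {set V}}, E' \subset E /\ #|E'| = k /\ #|span E'| <= s.

Definition G6_free E :=
  ~ has_conf E 8 6 /\ forall l, 2 <= l <= 5 -> ~ has_conf E l.+1 l.

Definition inC E (p : {set V}) (i : nat) : bool :=
  [exists E' : {set {set V}},
     [&& E' \subset E, #|E'| == i & #|p :|: span E'| <= i + 2]].

Definition P1 E : {set {set V}} :=
  [set p : {set V} | (#|p| == 2) && [exists e in E, p \subset e]].

Definition Ple (t : nat) E : {set {set V}} :=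
  [set p : {set V} | (#|p| == 2) &&
     [exists i : 'I_t.+1, (0 < (i : nat)) && inC E p i]].
End Hyper.

(* Vertices:  inl (inl i)            = x_i                (i : 'I_3)
              inl (inr (i,k))        = a_i, b_i, a'_i, b'_i  for k = 0,1,2,3
              inr ((i,k), m)         = c, d, c', d' (m = 0,1,2,3) attached
                                       to the pair x_i y_(i,k)  *)
Definition V63 : finType := ('I_3 + ('I_3 * 'I_4) + (('I_3 * 'I_4) * 'I_4))%type.

Definition vX (i : 'I_3) : V63 := inl (inl i).
Definition vY (i : 'I_3) (k : nat) : V63 := inl (inr (i, inord k)).
Definition vZ (p : 'I_3 * 'I_4) (m : nat) : V63 := inr (p, inord m).

Definition pairs12 : {set {set V63}} :=
  [set [set vX p.1; inl (inr p)] | p : 'I_3 * 'I_4].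

Definition F63 : {set {set V63}} :=
  [set [set vX (inord 0); vX (inord 1); vX (inord 2)]]
  :|: [set [set vY i 0; vY i 1; vX j] | i : 'I_3, j : 'I_3 in [set j : 'I_3 | j != i]]
  :|: [set [set vY i 2; vY i 3; vX j] | i : 'I_3, j : 'I_3 in [set j : 'I_3 | j != i]]
  :|: [set [set vZ p 0; vZ p 1; u] | p : 'I_3 * 'I_4, u : V63 in [set vX p.1; inl (inr p)]]
  :|: [set [set vZ p 2; vZ p 3; u] | p : 'I_3 * 'I_4, u : V63 in [set vX p.1; inl (inr p)]].

From mathcomp Require Import all_boot.
Set Implicit Arguments. Unset Strict Implicit. Unset Printing Implicit Defensive.

(* Every claim is about one explicit 3-graph, so it is decided by computation; what needs
   proof is that the computation decides the right thing.  [spans s k [::] cs] lists the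
   vertex sets spanned by k-edge subfamilies of the edge list cs, abandoning a partial family
   as soon as it spans more than s vertices; [spansP] shows that this pruned search still finds
   every k edges whose span, together with a given vertex set, has at most s vertices.  That
   one statement decides both the (s,k)-configurations of G_6 and the condition i \in C_F(xy);
   for the latter the three searches i = 1, 2, 3 serve all 1953 vertex pairs at once.  The
   searches run under [vm_compute] on the edges encoded as lists of natural numbers. *)

Section SeqSets.
Variable V : finType.
Implicit Types (a c d : seq V) (cs : seq (seq V)) (e : {set V}) (E : {set {set V}}).

Definition seq_set c : {set V} := [set x in c].
Definition edge_set cs : {set {set V}} := [set e in map seq_set cs].
Definition same_elems c d := all (mem d) c && all (mem c) d.

Lemma seq_set_nil : seq_set [::] = set0.
Proof. by apply/setP=> x; rewrite !inE. Qed.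

Lemma seq_set_cat a c : seq_set (a ++ c) = seq_set a :|: seq_set c.
Proof. by apply/setP=> x; rewrite !inE mem_cat. Qed.

Lemma seq_set_undup c : seq_set (undup c) = seq_set c.
Proof. by apply/setP=> x; rewrite !inE mem_undup. Qed.

Lemma seq_set2 (x y : V) : seq_set [:: x; y] = [set x; y].
Proof. by apply/setP=> z; rewrite !inE. Qed.

Lemma seq_set3 (x y z : V) : seq_set [:: x; y; z] = [set x; y; z].
Proof. by apply/setP=> w; rewrite !inE orbA. Qed.

Lemma card_seq_set c : #|seq_set c| = size (undup c).
Proof. by rewrite cardsE -(eq_card (mem_undup c)); apply/card_uniqP/undup_uniq. Qed.

Lemma subset_seq_set c d : (seq_set c \subset seq_set d) = all (mem d) c.
Proof. by apply/subsetP/allP=> sub x; have := sub x; rewrite !inE. Qed.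

Lemma seq_set_eqP c d : reflect (seq_set c = seq_set d) (same_elems c d).
Proof. by rewrite /same_elems -!subset_seq_set -eqEsubset; apply: eqP. Qed.

Lemma uniq_seq_sets cs :
  uniq (map seq_set cs) = pairwise (fun c d => ~~ same_elems c d) cs.
Proof.
rewrite uniq_pairwise pairwise_map; apply: eq_pairwise => c d /=.
by rewrite (sameP eqP (seq_set_eqP c d)).
Qed.

Lemma edge_set_cat cs cs' : edge_set (cs ++ cs') = edge_set cs :|: edge_set cs'.
Proof. by apply/setP=> e; rewrite !inE map_cat mem_cat. Qed.

Lemma edge_set_cons c cs : edge_set (c :: cs) = seq_set c |: edge_set cs.
Proof. by apply/setP=> e; rewrite !inE. Qed.

Lemma span_set0 : span (set0 : {set {set V}}) = set0.
Proof. by rewrite /span big_set0. Qed.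

Lemma span_setU1 e E : span (e |: E) = e :|: span E.
Proof. by rewrite /span bigcup_setU big_set1. Qed.

End SeqSets.
Arguments seq_set {V} c.

Fixpoint spans (T : eqType) (s k : nat) (acc : seq T) (cs : seq (seq T)) {struct cs} :
    seq (seq T) :=
  if k is k'.+1 then
    if cs is c :: cs' then
      let acc' := undup (acc ++ c) in
      (if size acc' <= s then spans s k' acc' cs' else [::]) ++ spans s k acc cs'
    else [::]
  else [:: acc].

Definition has_small_union (T : eqType) (s : nat) (a : seq T) (L : seq (seq T)) :=
  has (fun S => size (undup (a ++ S)) <= s) L.

Section SpansSpec.
Variable V : finType.
Implicit Types (a acc c : seq V) (cs : seq (seq V)).

Let bounded_union s a acc (E : {set {set V}}) :=
  #|seq_set a :|: (seq_set acc :|: span E)| <= s.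

Lemma bounded_union_extend s a acc c (E : {set {set V}}) :
  bounded_union s a (undup (acc ++ c)) E = bounded_union s a acc (seq_set c |: E).
Proof. by rewrite /bounded_union seq_set_undup seq_set_cat span_setU1 !setUA. Qed.

Lemma spans0P s acc a cs :
  reflect (exists2 E : {set {set V}}, E \subset edge_set cs &
             #|E| = 0 /\ bounded_union s a acc E)
          (has_small_union s a (spans s 0 acc cs)).
Proof.
have bounded0 : bounded_union s a acc set0 = (size (undup (a ++ acc)) <= s).
  by rewrite /bounded_union span_set0 setU0 -seq_set_cat card_seq_set.
have -> : spans s 0 acc cs = [:: acc] by case: cs.
rewrite /has_small_union /= orbF -bounded0.
apply: (iffP idP) => [bound | [E _ [/eqP]]].
  by exists set0; [exact: sub0set | rewrite cards0].
by rewrite cards_eq0 => /eqP ->.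
Qed.

Lemma spansP s k acc a cs : uniq (map seq_set cs) ->
  reflect (exists2 E : {set {set V}}, E \subset edge_set cs &
             #|E| = k /\ bounded_union s a acc E)
          (has_small_union s a (spans s k acc cs)).
Proof.
elim: cs k acc => [|c cs IH] [|k] acc uniq_cs; try exact: spans0P.
  apply: ReflectF => -[E + [cardE _]].
  have -> : edge_set [::] = set0 :> {set {set V}} by apply/setP=> e; rewrite !inE.
  by rewrite subset0 => /eqP E0; rewrite E0 cards0 in cardE.
move: uniq_cs; rewrite map_cons cons_uniq => /andP [c_new uniq_cs].
rewrite /has_small_union [spans _ _ _ _]/= has_cat -!/(has_small_union _ _ _).
have c_notin (E : {set {set V}}) : E \subset edge_set cs -> seq_set c \notin E.
  by move=> sub; apply: contra c_new => /(subsetP sub); rewrite inE.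
apply: (iffP orP) => [[|] | [E sub [cardE bound]]].
- case: ifP => // _ /IH-/(_ uniq_cs) [E sub [cardE bound]].
  exists (seq_set c |: E); first by rewrite edge_set_cons setUS.
  by rewrite cardsU1 c_notin // cardE -bounded_union_extend.
- case/IH=> // E sub cardE_bound; exists E => //.
  by rewrite edge_set_cons (subset_trans sub) // subsetUr.
case: (boolP (seq_set c \in E)) => cE; [left | right].
- have defE : E = seq_set c |: E :\ seq_set c by rewrite setD1K.
  have sub' : E :\ seq_set c \subset edge_set cs.
    apply/subsetP=> e; rewrite !inE => /andP [ne eE].
    by have := subsetP sub e eE; rewrite edge_set_cons !inE (negbTE ne).
  have -> : size (undup (acc ++ c)) <= s.
    rewrite -card_seq_set seq_set_cat (leq_trans _ bound) //.
    have c_span : seq_set c \subset span E by apply: bigcup_sup cE.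
    apply/subset_leq_card/subsetP=> x; rewrite !inE => /orP [x_acc | x_c].
      by rewrite x_acc orbT.
    by rewrite (subsetP c_span) ?inE // !orbT.
  apply/IH=> //; exists (E :\ seq_set c) => //.
  split; last by rewrite bounded_union_extend -defE.
  by move: cardE; rewrite (cardsD1 (seq_set c)) cE => -[].
- apply/IH=> //; exists E => //; apply/subsetP=> e eE.
  have := subsetP sub e eE; rewrite edge_set_cons !inE.
  by case: eqP eE cE => [-> -> | _].
Qed.

Lemma has_confP cs s k : uniq (map seq_set cs) ->
  reflect (has_conf (edge_set cs) s k) (has_small_union s [::] (spans s k [::] cs)).
Proof.
move=> uniq_cs; apply: (iffP (spansP _ _ _ _ uniq_cs)).
  by move=> [E sub [cardE]]; rewrite /bounded_union seq_set_nil !set0U; exists E.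
by move=> [E [sub [cardE]]]; exists E => //; rewrite /bounded_union seq_set_nil !set0U.
Qed.

Lemma inC_spans cs c i : uniq (map seq_set cs) ->
  inC (edge_set cs) (seq_set c) i = has_small_union (i + 2) c (spans (i + 2) i [::] cs).
Proof.
move=> uniq_cs; apply/existsP/(spansP _ _ _ _ uniq_cs) => [[E] | [E sub [cardE bound]]].
  case/and3P=> sub /eqP cardE bound; exists E => //.
  by split; rewrite /bounded_union ?seq_set_nil ?set0U.
by exists E; rewrite sub cardE eqxx; move: bound; rewrite /bounded_union seq_set_nil set0U.
Qed.

End SpansSpec.

Section InjectiveImage.
Variables (T T' : eqType) (f : T -> T').
Hypothesis f_inj : injective f.

Lemma spans_map s k acc cs :
  spans s k (map f acc) (map (map f) cs) = map (map f) (spans s k acc cs).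
Proof.
elim: cs k acc => [|c cs IH] [|k] acc //=.
by rewrite -map_cat undup_map_inj // size_map map_cat -!IH; case: ifP => // _; rewrite IH.
Qed.

Lemma has_small_union_spans_map s k a cs :
  has_small_union s (map f a) (spans s k [::] (map (map f) cs)) =
  has_small_union s a (spans s k [::] cs).
Proof.
rewrite -[[::]]/(map f [::]) spans_map /has_small_union has_map.
by apply: eq_has => S /=; rewrite -map_cat undup_map_inj // size_map.
Qed.

End InjectiveImage.

Lemma uniq_map_inj_in (T T' : eqType) (f : T -> T') (s : seq T) :
  uniq (map f s) -> {in s &, injective f}.
Proof.
elim: s => //= z s IH /andP [fz_new /IH f_inj] x y.
rewrite !inE => /predU1P [-> | xs] /predU1P [-> | ys] // fxy.
- by case/negP: fz_new; rewrite fxy map_f.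
- by case/negP: fz_new; rewrite -fxy map_f.
- exact: f_inj.
Qed.

Fixpoint pairs_of (T : Type) (s : seq T) : seq (seq T) :=
  if s is x :: s' then [seq [:: x; y] | y <- s'] ++ pairs_of s' else [::].

Section Pairs.
Variable V : finType.
Implicit Types (t : seq V) (p : {set V}).

Lemma mem_pairs_of t p : uniq t ->
  (p \in map seq_set (pairs_of t)) = (p \subset seq_set t) && (#|p| == 2).
Proof.
elim: t => [|x t IH] /=.
  by rewrite seq_set_nil subset0; case: eqP => // ->; rewrite cards0.
move=> /andP [x_new t_uniq]; rewrite map_cat mem_cat IH // -map_comp.
apply/orP/andP => [[/mapP [y yt ->] | /andP [sub p2]] | [sub /cards2P [u [v [uv defp]]]]].
- rewrite /= seq_set2 cards2; split.
    by apply/subsetP=> z; rewrite !inE => /orP [] /eqP ->; rewrite ?eqxx ?yt ?orbT.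
  by rewrite (contraNneq _ x_new) // => ->.
- split => //; apply: (subset_trans sub); apply/subsetP=> z; rewrite !inE => ->.
  exact: orbT.
case: (boolP (x \in p)) => xp; [left | right].
  have [y yx defpy] : exists2 y, y != x & p = [set x; y].
    move: xp; rewrite defp !inE => /orP [] /eqP ->.
      by exists v; first rewrite eq_sym.
    by exists u; last rewrite setUC.
  have yt : y \in t.
    by have := subsetP sub y; rewrite defpy !inE eqxx orbT (negbTE yx) => /(_ isT).
  by apply/mapP; exists y; rewrite //= seq_set2.
apply/andP; split; last by rewrite defp cards2 uv.
apply/subsetP=> z zp; have := subsetP sub z zp; rewrite !inE.
by case: eqP zp xp => [-> -> | _].
Qed.

Lemma uniq_pairs_of t : uniq t -> uniq (map seq_set (pairs_of t)).
Proof.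
elim: t => //= x t IH /andP [x_new t_uniq].
rewrite map_cat cat_uniq IH // andbT -map_comp; apply/andP; split.
  rewrite map_inj_in_uniq // => y y' yt _ /=; rewrite !seq_set2 => eq_pairs.
  have : y \in [set x; y'] by rewrite -eq_pairs !inE eqxx orbT.
  by rewrite !inE => /orP [/eqP yx | /eqP //]; rewrite -yx yt in x_new.
apply/hasPn => q; rewrite mem_pairs_of // => /andP [sub _].
apply/mapP => -[y _ defq]; have := subsetP sub x.
by rewrite defq /= seq_set2 !inE eqxx (negbTE x_new) => /(_ isT).
Qed.

Lemma card_pair_sets t (P : pred {set V}) : uniq t -> (forall x, x \in t) ->
  #|[set p : {set V} | (#|p| == 2) && P p]| = count (P \o seq_set) (pairs_of t).
Proof.
move=> t_uniq t_full; rewrite -count_map -size_filter.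
rewrite -(card_uniqP (filter_uniq _ (uniq_pairs_of t_uniq))); apply: eq_card => p.
rewrite inE mem_filter mem_pairs_of // andbC; congr (_ && _).
by rewrite [seq_set t](_ : _ = setT) ?subsetT //; apply/setP=> x; rewrite !inE t_full.
Qed.

End Pairs.

Lemma exists_pos_ord t (P : nat -> bool) :
  [exists i : 'I_t.+1, (0 < i) && P i] = has P (iota 1 t).
Proof.
apply/existsP/hasP => [[i /andP [i_pos Pi]] | [n]].
  by exists (val i); rewrite // mem_iota i_pos add1n ltn_ord.
by rewrite mem_iota add1n => /andP [n_pos n_le] Pn; exists (Ordinal n_le); rewrite n_pos.
Qed.

(* [enum 'I_n] and [inord] do not reduce under [vm_compute] (they decide membership
   through the opaque [idP]), so the computations below use this enumeration. *)
Definition ord_mod n k : 'I_n.+1 := Ordinal (ltn_pmod k (ltn0Sn n)).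
Definition ord_list n : seq 'I_n.+1 := [seq ord_mod n k | k <- iota 0 n.+1].

Lemma ord_modE n k : k <= n -> ord_mod n k = inord k.
Proof. by move=> k_le; apply/val_inj; rewrite /= modn_small // inordK. Qed.

Lemma mem_ord_list n (i : 'I_n.+1) : i \in ord_list n.
Proof.
apply/mapP; exists (val i); first by rewrite mem_iota ltn_ord.
by apply/val_inj; rewrite /= modn_small.
Qed.

Definition pair_indices : seq ('I_3 * 'I_4) :=
  [seq (i, k) | i <- ord_list 2, k <- ord_list 3].

Lemma mem_pair_indices q : q \in pair_indices.
Proof. by case: q => i k; apply/allpairsP; exists (i, k); rewrite !mem_ord_list. Qed.

Definition vYc (i : 'I_3) k : V63 := inl (inr (i, ord_mod 3 k)).
Definition vZc (q : 'I_3 * 'I_4) m : V63 := inr (q, ord_mod 3 m).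
Definition pair_ends (q : 'I_3 * 'I_4) : seq V63 := [:: vX q.1; inl (inr q)].

Definition F63_seq : seq (seq V63) :=
  [:: [:: vX (ord_mod 2 0); vX (ord_mod 2 1); vX (ord_mod 2 2)]]
  ++ [seq [:: vYc i 0; vYc i 1; vX j] | i <- ord_list 2, j <- [seq j <- ord_list 2 | j != i]]
  ++ [seq [:: vYc i 2; vYc i 3; vX j] | i <- ord_list 2, j <- [seq j <- ord_list 2 | j != i]]
  ++ [seq [:: vZc q 0; vZc q 1; u] | q <- pair_indices, u <- pair_ends q]
  ++ [seq [:: vZc q 2; vZc q 3; u] | q <- pair_indices, u <- pair_ends q].

Lemma imset2_edge_set (A B V : finType) (f : A -> B -> {set V}) (g : A -> B -> seq V)
    (D1 : mem_pred A) (D2 : A -> mem_pred B) (sA : seq A) (sB : A -> seq B) :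
  (forall x y, seq_set (g x y) = f x y) ->
  (forall x, in_mem x D1 = (x \in sA)) -> (forall x y, in_mem y (D2 x) = (y \in sB x)) ->
  imset2 f D1 D2 = edge_set [seq g x y | x <- sA, y <- sB x].
Proof.
move=> fg D1E D2E; apply/setP=> z; rewrite inE map_allpairs.
apply/imset2P/allpairsPdep => [[x y xD1 yD2 ->] | [x [y [xsA ysB ->]]]].
  by exists x, y; rewrite -D1E -D2E fg.
by exists x y; rewrite ?D1E ?D2E ?fg.
Qed.

Lemma F63E : F63 = edge_set F63_seq.
Proof.
have vYE i k : k < 4 -> vY i k = vYc i k by move=> k_lt; rewrite /vYc ord_modE.
have vZE q m : m < 4 -> vZ q m = vZc q m by move=> m_lt; rewrite /vZc ord_modE.
rewrite /F63 /F63_seq 4!edge_set_cat !setUA.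
congr (_ :|: _ :|: _ :|: _ :|: _).
  by apply/setP=> e; rewrite /edge_set !inE seq_set3 !ord_modE.
all: apply: imset2_edge_set => [x y | x | x y];
  by rewrite ?seq_set3 ?vYE ?vZE ?mem_filter ?mem_ord_list ?mem_pair_indices ?inE ?andbT.
Qed.

Definition V63_list : seq V63 :=
  [seq vX i | i <- ord_list 2] ++ [seq inl (inr q) | q <- pair_indices]
  ++ [seq inr (q, m) | q <- pair_indices, m <- ord_list 3].

Lemma mem_V63_list x : x \in V63_list.
Proof.
rewrite 2!mem_cat; case: x => [[i | q] | [q m]].
- by rewrite (map_f vX (mem_ord_list i)).
- by rewrite (map_f (fun q => inl (inr q) : V63) (mem_pair_indices q)) orbT.
- rewrite (allpairs_f (fun q m => inr (q, m) : V63) (mem_pair_indices q)) ?orbT //.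
  exact: mem_ord_list.
Qed.

Definition vcode (x : V63) : nat :=
  match x with
  | inl (inl i) => i
  | inl (inr (i, k)) => 3 + 4 * i + k
  | inr ((i, k), m) => 15 + 16 * i + 4 * k + m
  end.

Lemma uniq_vcode_V63_list : uniq (map vcode V63_list).
Proof. by vm_compute. Qed.

Lemma uniq_V63_list : uniq V63_list.
Proof. exact: map_uniq uniq_vcode_V63_list. Qed.

Lemma vcode_inj : injective vcode.
Proof. by move=> x y; apply: (uniq_map_inj_in uniq_vcode_V63_list); apply: mem_V63_list. Qed.

Definition F63_codes := map (map vcode) F63_seq.

Lemma uniq_F63_seq : uniq (map seq_set F63_seq).
Proof. by rewrite uniq_seq_sets; vm_compute. Qed.

Lemma F63_confP s k :
  reflect (has_conf F63 s k) (has_small_union s [::] (spans s k [::] F63_codes)).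
Proof.
rewrite -[[::]]/(map vcode [::]) has_small_union_spans_map; last exact: vcode_inj.
by rewrite F63E; apply: has_confP uniq_F63_seq.
Qed.

Lemma F63_inC c i :
  inC F63 (seq_set c) i = has_small_union (i + 2) (map vcode c) (spans (i + 2) i [::] F63_codes).
Proof.
by rewrite has_small_union_spans_map ?F63E ?inC_spans //; [exact: uniq_F63_seq | exact: vcode_inj].
Qed.

Lemma F63_seq_card3 : all (fun c => size (undup c) == 3) F63_seq.
Proof. by vm_compute. Qed.

Lemma F63_conf_check :
  all (fun sk => ~~ has_small_union sk.1 [::] (spans sk.1 sk.2 [::] F63_codes))
      [:: (8, 6); (3, 2); (4, 3); (5, 4); (6, 5)].
Proof. by vm_compute. Qed.

Lemma F63_G6_free : G6_free F63.
Proof.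
have free s k : (s, k) \in [:: (8, 6); (3, 2); (4, 3); (5, 4); (6, 5)] -> ~ has_conf F63 s k.
  by move=> sk /F63_confP; apply/negP; apply: (allP F63_conf_check (s, k) sk).
split; first exact: free.
by move=> l /andP [l_ge2 l_le5]; apply: free; case: l l_ge2 l_le5 => [|[|[|[|[|[|l]]]]]].
Qed.

Definition in_P1_or_pairs12 (c : seq V63) : bool :=
  has (fun e => all (mem e) c) F63_seq || has (fun q => same_elems c (pair_ends q)) pair_indices.

Lemma P1_pairs12E c : #|seq_set c| = 2 ->
  (seq_set c \in P1 F63 :|: pairs12) = in_P1_or_pairs12 c.
Proof.
move=> c2; rewrite in_setU /P1 inE c2 eqxx /=; congr (_ || _).
  rewrite F63E; apply/existsP/hasP => [[e /andP []] | [d dF c_sub]].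
    by rewrite inE => /mapP [d dF ->]; rewrite subset_seq_set; exists d.
  by exists (seq_set d); rewrite inE map_f //= subset_seq_set.
apply/imsetP/hasP => [[q _ cq] | [q _ /seq_set_eqP cq]].
  by exists q; rewrite ?mem_pair_indices //; apply/seq_set_eqP; rewrite cq seq_set2.
by exists q; rewrite // cq seq_set2.
Qed.

(* The [let]s make [vm_compute] run each search once instead of once per pair. *)
Lemma P3_check :
  let S1 := spans 3 1 [::] F63_codes in
  let S2 := spans 4 2 [::] F63_codes in
  let S3 := spans 5 3 [::] F63_codes in
  all (fun c => [|| has_small_union 3 (map vcode c) S1, has_small_union 4 (map vcode c) S2
                  | has_small_union 5 (map vcode c) S3] == in_P1_or_pairs12 c)
      (pairs_of V63_list).
Proof. by vm_compute. Qed.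

Lemma P3_count : count in_P1_or_pairs12 (pairs_of V63_list) = 165.
Proof. by vm_compute. Qed.

Lemma Ple3_pair c : c \in pairs_of V63_list ->
  [exists i : 'I_4, (0 < i) && inC F63 (seq_set c) i] = in_P1_or_pairs12 c.
Proof.
have exists_pos_ord4 (P : nat -> bool) :
    [exists i : 'I_4, (0 < i) && P i] = [|| P 1, P 2 | P 3].
  by rewrite exists_pos_ord /= orbF.
by move=> cP; rewrite exists_pos_ord4 !F63_inC; apply/eqP/(allP P3_check c cP).
Qed.

Lemma P1_pairs12_card p : p \in P1 F63 :|: pairs12 -> #|p| = 2.
Proof.
rewrite inE => /orP [|/imsetP [q _ ->]]; first by rewrite inE => /andP [/eqP].
by rewrite cards2.
Qed.

Lemma Ple3E : Ple 3 F63 = P1 F63 :|: pairs12.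
Proof.
apply/setP=> p; rewrite /Ple inE; case: (boolP (#|p| == 2)) => /= p2; last first.
  by apply/esym/negbTE; apply: contra p2 => /P1_pairs12_card ->.
have : p \in map seq_set (pairs_of V63_list).
  rewrite mem_pairs_of ?uniq_V63_list // p2 andbT.
  by apply/subsetP=> x _; rewrite inE mem_V63_list.
case/mapP=> c cP defp; rewrite defp in p2 *.
by rewrite Ple3_pair // P1_pairs12E //; apply/eqP.
Qed.

Theorem mainTheorem9 :
  [/\ #|[set: V63]| = 63,
      #|F63| = 61,
      is_3graph F63,
      G6_free F63
    & #|Ple 3 F63| = 165 /\ Ple 3 F63 = P1 F63 :|: pairs12].
Proof.
split.
- by rewrite cardsT /V63 !card_sum !card_prod !card_ord.
- by rewrite F63E cardsE (card_uniqP uniq_F63_seq) size_map.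
- apply/forall_inP => e; rewrite F63E inE => /mapP [c cF ->].
  by rewrite card_seq_set (allP F63_seq_card3 c cF).
- exact: F63_G6_free.
split; last exact: Ple3E.
rewrite /Ple (card_pair_sets _ uniq_V63_list mem_V63_list).
by rewrite -P3_count; apply: eq_in_count => c /Ple3_pair.
Qed.
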